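(* Let $\mathcal{H}$ be a complex Hilbert space and let $\mathcal{A}:\operatorname{dom}(\mathcal{A})\subseteq\mathcal{H}\to\mathcal{H}$ be a closed linear operator (not necessarily bounded or selfadjoint). Let $$r(z)=\omega_0+\sum_{j=1}^N\sum_{i=1}^{\nu_j}\frac{\omega_{j,i}}{(z_j-z)^i}$$ with $\omega_0,\omega_{j,i}\in\mathbb{C}$, positive integers $\nu_j$, and distinct points $z_1,\dots,z_N$ in the resolvent set $\rho(\mathcal{A})$, and let $r(\mathcal{A})=\omega_0+\sum_{j=1}^N\sum_{i=1}^{\nu_j}\omega_{j,i}R(z_j)^i$, a bounded operator on $\mathcal{H}$. Then for every $\mu\in\mathbb{C}$ with $\mu\neq\omega_0$, $$E_\mu(r(\mathcal{A}))=\bigoplus_{\lambda\in r^{-1}_\mu}E^\infty_\lambda(\mathcal{A}),$$ where the right-hand side is a direct sum.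
   Context: $R(z)=(z-\mathcal{A})^{-1}:\mathcal{H}\to\operatorname{dom}(\mathcal{A})$ denotes the resolvent for $z\in\rho(\mathcal{A})$. Set $\operatorname{dom}(\mathcal{A}^1)=\operatorname{dom}(\mathcal{A})$, $\operatorname{dom}(\mathcal{A}^n)=\{x\in\operatorname{dom}(\mathcal{A}):\mathcal{A}x\in\operatorname{dom}(\mathcal{A}^{n-1})\}$ for $n>1$, and $\operatorname{dom}(\mathcal{A}^\infty)=\bigcap_{n\ge1}\operatorname{dom}(\mathcal{A}^n)$. For $\lambda\in\mathbb{C}$, $E^\infty_\lambda(\mathcal{A})=\bigcup_{n\ge1}\{u\in\operatorname{dom}(\mathcal{A}^\infty):(\mathcal{A}-\lambda)^nu=0\}$ (trivial if $\lambda$ is not an eigenvalue). For $\mu\in\mathbb{C}$, $E_\mu(r(\mathcal{A}))=\bigcup_{n\ge1}\{u\in\mathcal{H}:(r(\mathcal{A})-\mu)^nu=0\}$. Finally $r^{-1}_\mu=\{\lambda\in\mathbb{C}\setminus\{z_1,\dots,z_N\}:\ r(\lambda)=\mu\}$. *)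

From HB Require Import structures.
From mathcomp Require Import all_boot all_order all_algebra.
From mathcomp Require Import all_classical all_reals all_analysis.
From mathcomp Require Import complex.
Set Implicit Arguments. Unset Strict Implicit. Unset Printing Implicit Defensive.
Import Order.TTheory GRing.Theory Num.Theory.
Import numFieldNormedType.Exports.
Local Open Scope ring_scope.
Local Open Scope classical_set_scope.

Section Defs.
Variable R : realType.
Local Notation C := (R[i]).
Variable H : completeNormedModType C.

(* ip is an inner product on H (linear in the first argument, conjugate
   symmetric) inducing the norm of H:  <x,x> = |x|^2.  Together with the
   completeness of H, (H, ip) is a complex Hilbert space. *)
Definition is_inner_product (ip : H -> H -> C) : Prop :=
  [/\ forall (a : C) (x y v : H), ip (a *: x + y) v = a * ip x v + ip y v,
      forall x y : H, ip y x = (ip x y)^*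
    & forall x : H, ip x x = `|x| ^+ 2].

Definition is_subspace (dom : set H) : Prop :=
  dom 0 /\ forall (a : C) (x y : H), dom x -> dom y -> dom (a *: x + y).

(* A : dom(A) ⊆ H -> H is a closed linear operator (values of A outside dom
   are irrelevant). *)
Definition is_closed_operator (dom : set H) (A : H -> H) : Prop :=
  [/\ is_subspace dom,
      forall (a : C) (x y : H), dom x -> dom y -> A (a *: x + y) = a *: A x + A y
    & closed [set p : H * H | dom p.1 /\ p.2 = A p.1]].

(* R(z) = (z - A)^{-1} : H -> dom(A)  (meaningful when z is in the resolvent set) *)
Definition resolvent (dom : set H) (A : H -> H) (z : C) (y : H) : H :=
  xget 0 [set x | dom x /\ z *: x - A x = y].

Definition in_resolvent_set (dom : set H) (A : H -> H) (z : C) : Prop :=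
  (forall y : H, exists! x : H, dom x /\ z *: x - A x = y)
  /\ continuous (resolvent dom A z).

Fixpoint domn (dom : set H) (A : H -> H) (n : nat) : set H :=
  match n with
  | 0 => setT
  | n'.+1 => fun x => dom x /\ domn dom A n' (A x)
  end.

Definition dom_inf (dom : set H) (A : H -> H) : set H :=
  fun x => forall n, (0 < n)%N -> domn dom A n x.

Definition gen_eigenspace_inf (dom : set H) (A : H -> H) (l : C) : set H :=
  [set u | dom_inf dom A u /\
           exists n, (0 < n)%N /\ iter n (fun x => A x - l *: x) u = 0].

Definition gen_eigenspace (T : H -> H) (m : C) : set H :=
  [set u | exists n, (0 < n)%N /\ iter n (fun x => T x - m *: x) u = 0].

Definition ratfun (N : nat) (z : 'I_N -> C) (nu : 'I_N -> nat)
    (w : 'I_N -> nat -> C) (w0 : C) (l : C) : C :=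
  w0 + \sum_(j < N) \sum_(1 <= i < (nu j).+1) w j i / (z j - l) ^+ i.

Definition ratop (dom : set H) (A : H -> H) (N : nat) (z : 'I_N -> C)
    (nu : 'I_N -> nat) (w : 'I_N -> nat -> C) (w0 : C) (x : H) : H :=
  w0 *: x + \sum_(j < N) \sum_(1 <= i < (nu j).+1)
                w j i *: iter i (resolvent dom A (z j)) x.

Definition ratfun_preimage (N : nat) (z : 'I_N -> C) (nu : 'I_N -> nat)
    (w : 'I_N -> nat -> C) (w0 : C) (m : C) : set C :=
  [set l | (forall j, l != z j) /\ ratfun z nu w w0 l = m].

(* V is the (internal, algebraic) direct sum of the subspaces E λ, λ ∈ S:
   every element of V is a finite sum of elements of the E λ (λ ∈ S), every
   such finite sum lies in V, and the family is independent. *)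
Definition is_direct_sum (V : set H) (E : C -> set H) (S : set C) : Prop :=
  (forall u : H, V u <->
     exists (s : seq C) (f : C -> H),
       [/\ uniq s, (forall l, l \in s -> S l), (forall l, l \in s -> E l (f l))
         & u = \sum_(l <- s) f l])
  /\ (forall (s : seq C) (f : C -> H),
        uniq s -> (forall l, l \in s -> S l) -> (forall l, l \in s -> E l (f l)) ->
        \sum_(l <- s) f l = 0 -> forall l, l \in s -> f l = 0).

End Defs.

(* Write r - mu = q / p with p = prod_j (z_j - X)^(nu_j); since w0 <> mu, q has
   the degree of p, so q <> 0.  On the smooth vectors D = dom(A^oo), p(A) is a
   bijection (each z_j - A is, with inverse R(z_j)) and (r(A) - mu) p(A) = q(A);
   hence (r(A) - mu)^n u = 0 iff q(A)^n u = 0 for u in D.  Every generalized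
   eigenvector u of r(A) lies in D, because r(A) - mu is the invertible scalar
   w0 - mu plus resolvent terms that raise regularity.  The kernel of q(A)^n on
   D splits along the roots of q into generalized eigenspaces of A; the roots
   that are not poles form r^-1(mu), and the components at poles vanish since
   z_j - A is injective.  Generalized eigenspaces for distinct eigenvalues are
   independent by Bezout. *)

From HB Require Import structures.
From mathcomp Require Import all_boot all_order all_algebra.
From mathcomp Require Import all_classical all_reals all_analysis.
From mathcomp Require Import complex.
From mathcomp Require Import ring.
Set Implicit Arguments. Unset Strict Implicit. Unset Printing Implicit Defensive.
Import Order.TTheory GRing.Theory Num.Theory.
Import numFieldNormedType.Exports.
Local Open Scope ring_scope.
Local Open Scope classical_set_scope.

Lemma size_sum_lt (K : nzSemiRingType) I (r : seq I) (P : pred I) (F : I -> {poly K}) n :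
  (0 < n)%N -> (forall i, P i -> (size (F i) < n)%N) ->
  (size (\sum_(i <- r | P i) F i)%R < n)%N.
Proof.
move=> n_gt0 F_lt; apply: (big_ind (fun p : {poly K} => size p < n)%N) => //.
  by rewrite size_poly0.
move=> p q p_lt q_lt.
by rewrite (leq_ltn_trans (size_polyD p q)) // gtn_max p_lt q_lt.
Qed.

Section OperatorPolynomials.
Variables (K : fieldType) (V : lmodType K).

Definition linear_invariant (D : set V) (A : V -> V) : Prop :=
  [/\ D 0, (forall (a : K) (x y : V), D x -> D y -> D (a *: x + y)),
      (forall x, D x -> D (A x))
    & forall (a : K) (x y : V), D x -> D y -> A (a *: x + y) = a *: A x + A y].

Variables (D : set V) (A : V -> V).
Implicit Types (p q : {poly K}) (x y : V).

Definition horner_op (p : {poly K}) (x : V) : V :=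
  \sum_(i < size p) p`_i *: iter i A x.

Lemma horner_op_widen n p x : (size p <= n)%N ->
  horner_op p x = \sum_(i < n) p`_i *: iter i A x.
Proof.
move=> le_p_n; rewrite /horner_op -(subnKC le_p_n) big_split_ord /=.
by rewrite [X in _ + X]big1 ?addr0 // => i _; rewrite nth_default ?scale0r ?leq_addr.
Qed.

Lemma horner_opD p q x : horner_op (p + q) x = horner_op p x + horner_op q x.
Proof.
set n := maxn (size p) (size q).
rewrite !(@horner_op_widen n) ?size_polyD ?leq_maxl ?leq_maxr // -big_split.
by apply: eq_bigr => i _; rewrite coefD scalerDl.
Qed.

Lemma horner_opZ c p x : horner_op (c *: p) x = c *: horner_op p x.
Proof.
rewrite (@horner_op_widen (size p)) ?size_scale_leq // scaler_sumr.
by apply: eq_bigr => i _; rewrite coefZ scalerA.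
Qed.

Lemma horner_op0 x : horner_op 0 x = 0.
Proof. by rewrite /horner_op size_poly0 big_ord0. Qed.

Lemma horner_opN p x : horner_op (- p) x = - horner_op p x.
Proof. by rewrite -(scaleN1r p) horner_opZ scaleN1r. Qed.

Lemma horner_opB p q x : horner_op (p - q) x = horner_op p x - horner_op q x.
Proof. by rewrite horner_opD horner_opN. Qed.

Lemma horner_op_sum I (r : seq I) (P : pred I) (F : I -> {poly K}) x :
  horner_op (\sum_(i <- r | P i) F i) x = \sum_(i <- r | P i) horner_op (F i) x.
Proof.
exact: (big_morph (horner_op^~ x) (fun p q => horner_opD p q x) (horner_op0 x)).
Qed.

Lemma horner_opC c x : horner_op c%:P x = c *: x.
Proof. by rewrite (@horner_op_widen 1) ?size_polyC_leq1 // big_ord1 coefC. Qed.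

Lemma horner_op1 x : horner_op 1 x = x.
Proof. by rewrite -polyC1 horner_opC scale1r. Qed.

Lemma horner_opX x : horner_op 'X x = A x.
Proof.
by rewrite /horner_op size_polyX big_ord_recl big_ord1 !coefX scale0r add0r scale1r.
Qed.

Hypothesis DA : linear_invariant D A.

Let D0 : D 0. Proof. by case: DA. Qed.
Let D_comb a x y : D x -> D y -> D (a *: x + y).
Proof. by case: DA => _ DL _ _; apply: DL. Qed.
Let DA_stable x : D x -> D (A x). Proof. by case: DA => _ _ DAx _; apply: DAx. Qed.
Let A_comb a x y : D x -> D y -> A (a *: x + y) = a *: A x + A y.
Proof. by case: DA => _ _ _ AL; apply: AL. Qed.

Let DD x y : D x -> D y -> D (x + y).
Proof. by move=> Dx Dy; have := D_comb 1 Dx Dy; rewrite scale1r. Qed.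
Let DZ a x : D x -> D (a *: x).
Proof. by move=> Dx; have := D_comb a Dx D0; rewrite addr0. Qed.
Let D_sum I (r : seq I) (P : pred I) (F : I -> V) :
  (forall i, P i -> D (F i)) -> D (\sum_(i <- r | P i) F i).
Proof. by move=> DF; apply: big_ind => //; apply: DD. Qed.
Let D_iter i x : D x -> D (iter i A x).
Proof. by move=> Dx; elim: i => //= i; apply: DA_stable. Qed.

Let A0 : A 0 = 0.
Proof.
have AOO := A_comb 1 D0 D0; rewrite !scale1r addr0 in AOO.
by apply: (addIr (A 0)); rewrite add0r -AOO.
Qed.
Let AD x y : D x -> D y -> A (x + y) = A x + A y.
Proof. by move=> Dx Dy; have := A_comb 1 Dx Dy; rewrite !scale1r. Qed.
Let AZ a x : D x -> A (a *: x) = a *: A x.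
Proof. by move=> Dx; have := A_comb a Dx D0; rewrite !addr0 A0 addr0. Qed.
Let A_sum I (r : seq I) (P : pred I) (F : I -> V) :
  (forall i, P i -> D (F i)) -> A (\sum_(i <- r | P i) F i) = \sum_(i <- r | P i) A (F i).
Proof.
move=> DF; elim: r => [|i r IHr]; first by rewrite !big_nil A0.
rewrite !big_cons; case: ifP => Pi //.
by rewrite AD ?IHr //; [apply: DF | apply: D_sum].
Qed.

Lemma D_horner_op p x : D x -> D (horner_op p x).
Proof. by move=> Dx; apply: D_sum => i _; apply/DZ/D_iter. Qed.

Lemma horner_op0r p : horner_op p 0 = 0.
Proof.
have iterA0 i : iter i A 0 = 0 by elim: i => //= i ->.
by rewrite /horner_op big1 // => i _; rewrite iterA0 scaler0.
Qed.

Lemma horner_opDr p x y : D x -> D y ->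
  horner_op p (x + y) = horner_op p x + horner_op p y.
Proof.
move=> Dx Dy; have iterAD i : iter i A (x + y) = iter i A x + iter i A y.
  by elim: i => //= i ->; apply: AD; apply: D_iter.
by rewrite /horner_op -big_split; apply: eq_bigr => i _; rewrite iterAD scalerDr.
Qed.

Lemma horner_op_sumr p I (r : seq I) (P : pred I) (F : I -> V) :
  (forall i, P i -> D (F i)) ->
  horner_op p (\sum_(i <- r | P i) F i) = \sum_(i <- r | P i) horner_op p (F i).
Proof.
move=> DF; elim: r => [|i r IHr]; first by rewrite !big_nil horner_op0r.
rewrite !big_cons; case: ifP => Pi //.
by rewrite horner_opDr ?IHr //; [apply: DF | apply: D_sum].
Qed.

Lemma horner_opA p x : D x -> horner_op p (A x) = A (horner_op p x).
Proof.
move=> Dx; rewrite /horner_op A_sum => [|i _]; last exact/DZ/D_iter.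
by apply: eq_bigr => i _; rewrite AZ -?iterSr //; apply: D_iter.
Qed.

Lemma horner_opMX p x : D x -> horner_op (p * 'X) x = A (horner_op p x).
Proof.
move=> Dx; rewrite (@horner_op_widen (size p).+1); last first.
  by rewrite (leq_trans (size_polyMleq _ _)) // size_polyX addn2.
rewrite big_ord_recl coefMX eqxx scale0r add0r /horner_op A_sum => [|i _]; last first.
  exact/DZ/D_iter.
by apply: eq_bigr => i _; rewrite coefMX AZ //; apply: D_iter.
Qed.

Lemma horner_opM p q x : D x -> horner_op (p * q) x = horner_op p (horner_op q x).
Proof.
move=> Dx; elim/poly_ind: p q => [|p c IHp] q; first by rewrite mul0r !horner_op0.
have Dq := D_horner_op q Dx.
rewrite mulrDl -mulrA [('X * q)]mulrC horner_opD IHp horner_opMX // mul_polyC.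
by rewrite horner_opZ horner_opD horner_opMX // horner_opC horner_opA.
Qed.

Lemma horner_op_comm p q x : D x ->
  horner_op p (horner_op q x) = horner_op q (horner_op p x).
Proof. by move=> Dx; rewrite -!horner_opM // mulrC. Qed.

Lemma horner_opXsubC_iter c m x : D x ->
  horner_op (('X - c%:P) ^+ m) x = iter m (fun y => A y - c *: y) x.
Proof.
move=> Dx; elim: m => [|m IHm]; first by rewrite expr0 horner_op1.
by rewrite exprS horner_opM // IHm horner_opB horner_opX horner_opC.
Qed.

Lemma horner_op_dvdp_eq0 p q x : p %| q -> D x ->
  horner_op p x = 0 -> horner_op q x = 0.
Proof. by move=> /dvdpP[r ->] Dx px0; rewrite horner_opM // px0 horner_op0r. Qed.

Lemma horner_op_coprime_eq0 p q x : coprimep p q -> D x ->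
  horner_op p x = 0 -> horner_op q x = 0 -> x = 0.
Proof.
move=> /Bezout_eq1_coprimepP[[u v] /= uv1] Dx px0 qx0.
by rewrite -(horner_op1 x) -uv1 horner_opD !horner_opM // px0 qx0 !horner_op0r addr0.
Qed.

(* Bezout: with u p + v q = 1, the components are (v q)(A) x and (u p)(A) x. *)
Lemma horner_op_coprime_split p q x : coprimep p q -> D x ->
  horner_op (p * q) x = 0 ->
  exists x1 x2, [/\ D x1, D x2, horner_op p x1 = 0, horner_op q x2 = 0 & x = x1 + x2].
Proof.
move=> /Bezout_eq1_coprimepP[[u v] /= uv1] Dx pqx0.
exists (horner_op (v * q) x), (horner_op (u * p) x); split; try exact: D_horner_op.
- by rewrite -horner_opM // mulrCA horner_opM // pqx0 horner_op0r.
- by rewrite -horner_opM // mulrCA [q * p]mulrC horner_opM // pqx0 horner_op0r.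
- by rewrite -horner_opD addrC uv1 horner_op1.
Qed.

Definition gen_eigvec (l : K) x :=
  D x /\ exists m, horner_op (('X - l%:P) ^+ m) x = 0.

Lemma gen_eigvec_exponent (s : seq K) (f : K -> V) :
  (forall l, l \in s -> gen_eigvec l (f l)) ->
  exists m, forall l, l \in s -> horner_op (('X - l%:P) ^+ m) (f l) = 0.
Proof.
elim: s => [|a s IHs] fs_gen; first by exists 0%N.
have [m fs_m] : exists m, forall l, l \in s -> horner_op (('X - l%:P) ^+ m) (f l) = 0.
  by apply: IHs => l ls; apply: fs_gen; rewrite inE ls orbT.
have [Dfa [ma fa_ma]] := fs_gen a (mem_head a s).
exists (maxn m ma) => l; rewrite inE => /predU1P[->|ls].
  by apply: horner_op_dvdp_eq0 fa_ma; rewrite ?dvdp_exp2l ?leq_maxr.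
have [Dfl _] : gen_eigvec l (f l) by apply: fs_gen; rewrite inE ls orbT.
by apply: horner_op_dvdp_eq0 (fs_m l ls); rewrite ?dvdp_exp2l ?leq_maxl.
Qed.

Lemma gen_eigvec_independent (s : seq K) (f : K -> V) : uniq s ->
  (forall l, l \in s -> gen_eigvec l (f l)) ->
  \sum_(l <- s) f l = 0 -> forall l, l \in s -> f l = 0.
Proof.
elim: s f => [//|a s IHs] f /= /andP[a_notin_s s_uniq] f_gen sum0.
have [m f_m] := gen_eigvec_exponent f_gen.
have fs_gen l : l \in s -> gen_eigvec l (f l).
  by move=> ls; apply/f_gen; rewrite inE ls orbT.
pose g l := horner_op (('X - a%:P) ^+ m) (f l).
have gs_gen l : l \in s -> gen_eigvec l (g l).
  move=> ls; have [Dfl [k fl_k]] := fs_gen l ls; split; first exact: D_horner_op.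
  by exists k; rewrite /g horner_op_comm // fl_k horner_op0r.
have gs_sum0 : \sum_(l <- s) g l = 0.
  have Dfs l : l \in s -> D (f l) by case/fs_gen.
  have [Dfa _] := f_gen a (mem_head a s).
  have := congr1 (horner_op (('X - a%:P) ^+ m)) sum0.
  rewrite big_cons big_seq horner_opDr //; last exact: D_sum.
  by rewrite f_m ?mem_head // add0r horner_op_sumr // horner_op0r -big_seq.
have fs0 l : l \in s -> f l = 0.
  move=> ls; have [Dfl _] := fs_gen l ls.
  apply: (@horner_op_coprime_eq0 (('X - a%:P) ^+ m) (('X - l%:P) ^+ m)) => //.
  - apply/coprimep_expl/coprimep_expr; rewrite coprimep_XsubC root_XsubC.
    by apply: contra a_notin_s => /eqP <-.
  - exact: (IHs g s_uniq gs_gen gs_sum0).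
  - by apply: f_m; rewrite inE ls orbT.
move=> l; rewrite inE => /predU1P[->|/fs0//].
by move: sum0; rewrite big_cons big1_seq ?addr0 // => l' /andP[_ /fs0].
Qed.

Definition horner_op_injective p := forall x, D x -> horner_op p x = 0 -> x = 0.
Definition horner_op_surjective p :=
  forall y, D y -> exists2 x, D x & horner_op p x = y.

Lemma horner_op_injectiveM p q :
  horner_op_injective p -> horner_op_injective q -> horner_op_injective (p * q).
Proof.
move=> p_inj q_inj x Dx; rewrite horner_opM // => pqx0.
by apply: q_inj => //; apply: p_inj => //; apply: D_horner_op.
Qed.

Lemma horner_op_surjectiveM p q :
  horner_op_surjective p -> horner_op_surjective q -> horner_op_surjective (p * q).
Proof.
move=> p_surj q_surj y Dy; have [x1 Dx1 <-] := p_surj y Dy.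
by have [x2 Dx2 <-] := q_surj x1 Dx1; exists x2; rewrite ?horner_opM.
Qed.

Lemma horner_op_injective_prod I (r : seq I) (P : pred I) (F : I -> {poly K}) :
  (forall i, P i -> horner_op_injective (F i)) ->
  horner_op_injective (\prod_(i <- r | P i) F i).
Proof.
move=> F_inj; apply: big_ind => //; last exact: horner_op_injectiveM.
by move=> x _; rewrite horner_op1.
Qed.

Lemma horner_op_surjective_prod I (r : seq I) (P : pred I) (F : I -> {poly K}) :
  (forall i, P i -> horner_op_surjective (F i)) ->
  horner_op_surjective (\prod_(i <- r | P i) F i).
Proof.
move=> F_surj; apply: big_ind => //; last exact: horner_op_surjectiveM.
by move=> y Dy; exists y; rewrite ?horner_op1.
Qed.

Lemma horner_op_injectiveX p n :
  horner_op_injective p -> horner_op_injective (p ^+ n).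
Proof.
by move=> p_inj; rewrite -(subn0 n) -prodr_const_nat; apply: horner_op_injective_prod.
Qed.

Lemma horner_op_surjectiveX p n :
  horner_op_surjective p -> horner_op_surjective (p ^+ n).
Proof.
by move=> p_surj; rewrite -(subn0 n) -prodr_const_nat; apply: horner_op_surjective_prod.
Qed.

Lemma gen_eigvec_eq0 c x :
  horner_op_injective ('X - c%:P) -> gen_eigvec c x -> x = 0.
Proof. by move=> c_inj [Dx [m]]; apply: horner_op_injectiveX. Qed.

Lemma gen_eigvec_decomposition (closedK : GRing.closed_field_axiom K) q x :
  q != 0 -> D x -> horner_op q x = 0 ->
  exists (s : seq K) (f : K -> V), [/\ uniq s, forall l, l \in s -> root q l,
    forall l, l \in s -> gen_eigvec l (f l) & x = \sum_(l <- s) f l].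
Proof.
have [n] := ubnP (size q); elim: n q x => // n IHn q x size_q q_neq0 Dx qx0.
have [/eqP/size_poly1P[c c_neq0 q_eq]|q_nonconst] := eqVneq (size q) 1%N.
  move: qx0; rewrite q_eq horner_opC => /eqP.
  rewrite scaler_eq0 (negbTE c_neq0) => /eqP ->.
  by exists [::], (fun=> 0); split; rewrite ?big_nil.
have [a qa0] := PreClosedField.closed_rootP closedK q q_nonconst.
have [m [q' q'a_neq0 q_eq]] := multiplicity_XsubC q a.
rewrite q_neq0 /= in q'a_neq0.
have q'_neq0 : q' != 0 by apply: contraNneq q_neq0; rewrite q_eq => ->; rewrite mul0r.
have m_gt0 : (0 < m)%N.
  by case: m q_eq => // q_eq; move: qa0; rewrite q_eq mulr1 (negbTE q'a_neq0).
have size_q' : (size q' < n)%N.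
  rewrite -ltnS (leq_trans _ size_q) // ltnS q_eq size_mul ?expf_neq0 ?polyXsubC_eq0 //.
  by rewrite size_exp_XsubC addnS /= -[X in (X < _)%N]addn0 ltn_add2l.
have coprime_q' : coprimep q' (('X - a%:P) ^+ m).
  by apply: coprimep_expr; rewrite coprimep_XsubC.
rewrite q_eq in qx0.
have [x2 [x1 [Dx2 Dx1 q'x2 am_x1 ->]]] := horner_op_coprime_split coprime_q' Dx qx0.
have [s [f [s_uniq s_roots f_gen ->]]] := IHn q' x2 size_q' q'_neq0 Dx2 q'x2.
have a_notin_s : a \notin s by apply: contra q'a_neq0 => /s_roots.
exists (a :: s), (fun l => if l == a then x1 else f l); split.
- by rewrite /= a_notin_s.
- move=> l; rewrite inE => /predU1P[->//|ls].
  by rewrite q_eq rootM s_roots.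
- move=> l; rewrite inE; case: eqP => [-> _|l_neq_a /= ls]; last exact: f_gen.
  by split; last exists m.
- rewrite big_cons eqxx addrC; congr (_ + _); apply: eq_big_seq => l ls.
  by case: eqP ls => // ->; rewrite (negbTE a_notin_s).
Qed.

End OperatorPolynomials.

Section SmoothVectors.
Variables (R : realType) (H : completeNormedModType R[i]).
Local Notation C := R[i].
Variables (dom : set H) (A : H -> H).
Hypothesis dom_subspace : is_subspace dom.
Hypothesis A_comb :
  forall (a : C) (x y : H), dom x -> dom y -> A (a *: x + y) = a *: A x + A y.
Local Notation domn := (domn dom A).
Local Notation Dinf := (dom_inf dom A).
Local Notation hop := (horner_op A).

Let dom0 : dom 0. Proof. by case: dom_subspace. Qed.
Let dom_comb a x y : dom x -> dom y -> dom (a *: x + y).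
Proof. by case: dom_subspace => _; apply. Qed.
Let A0 : A 0 = 0.
Proof.
have AOO := A_comb 1 dom0 dom0; rewrite !scale1r addr0 in AOO.
by apply: (addIr (A 0)); rewrite add0r -AOO.
Qed.

Lemma domn_comb n a x y : domn n x -> domn n y -> domn n (a *: x + y).
Proof.
elim: n x y => [//|n IHn] x y [dx Ax] [dy Ay]; split; first exact: dom_comb.
by rewrite A_comb //; apply: IHn.
Qed.

Lemma domn0 n : domn n 0.
Proof. by elim: n => [//|n IHn]; split; rewrite ?A0. Qed.

Lemma domnD n x y : domn n x -> domn n y -> domn n (x + y).
Proof. by move=> Dx Dy; have := domn_comb 1 Dx Dy; rewrite scale1r. Qed.

Lemma domnZ n a x : domn n x -> domn n (a *: x).
Proof. by move=> Dx; have := domn_comb a Dx (domn0 n); rewrite addr0. Qed.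

Lemma domnB n x y : domn n x -> domn n y -> domn n (x - y).
Proof. by move=> Dx Dy; rewrite -scaleN1r addrC; apply: domn_comb. Qed.

Lemma domn_sum n I (r : seq I) (P : pred I) (F : I -> H) :
  (forall i, P i -> domn n (F i)) -> domn n (\sum_(i <- r | P i) F i).
Proof. by move=> DF; apply: big_ind => //; [apply: domn0 | apply: domnD]. Qed.

Lemma domnS n x : domn n.+1 x -> domn n x.
Proof. by elim: n x => [//|n IHn] x [dx /IHn]. Qed.

Lemma domn_leq m n x : (m <= n)%N -> domn n x -> domn m x.
Proof. by move/subnK <-; elim: (n - m)%N => [//|k IHk] /domnS. Qed.

Lemma dom_infP x : Dinf x <-> forall n, domn n x.
Proof. by split=> [Dx [|n] //|Dx n _]; apply: Dx. Qed.

Let dom_inf_dom x : Dinf x -> dom x.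
Proof. by move=> Dx; case: (Dx 1%N isT). Qed.

Lemma dom_inf_linear_invariant : linear_invariant Dinf A.
Proof.
split=> [n _|a x y Dx Dy n n_gt0|x /dom_infP Dx n _|a x y Dx Dy].
- exact: domn0.
- by apply: domn_comb; [apply: Dx | apply: Dy].
- by case: (Dx n.+1).
- by apply: A_comb; apply: dom_inf_dom.
Qed.
Local Notation DAinf := dom_inf_linear_invariant.

Lemma gen_eigenspace_infE l u :
  gen_eigenspace_inf dom A l u <-> gen_eigvec Dinf A l u.
Proof.
split=> [[Du [n [_ n_u]]]|[Du [m m_u]]]; split=> //.
  by exists n; rewrite (horner_opXsubC_iter DAinf).
exists m.+1; split=> //.
by rewrite iterS -(horner_opXsubC_iter DAinf) // m_u A0 scaler0 subr0.
Qed.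

Lemma dom_inf_sum I (r : seq I) (P : pred I) (F : I -> H) :
  (forall i, P i -> Dinf (F i)) -> Dinf (\sum_(i <- r | P i) F i).
Proof. by move=> DF; apply/dom_infP => n; apply: domn_sum => i /DF/dom_infP. Qed.

Section Resolvent.
Variables (z0 : C) (z0_res : in_resolvent_set dom A z0).
Local Notation Rz := (resolvent dom A z0).

Lemma resolventP y : dom (Rz y) /\ z0 *: Rz y - A (Rz y) = y.
Proof.
case: z0_res => /(_ y)[x [x_sol _]] _.
by apply: (@xgetPex _ 0 [set x | dom x /\ z0 *: x - A x = y]); exists x.
Qed.

Lemma resolvent_eq x : dom x -> Rz (z0 *: x - A x) = x.
Proof.
move=> dx; case: z0_res => /(_ (z0 *: x - A x))[x0 [_ x0_uniq]] _.
apply: xget_unique => [|y y_sol]; first by [].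
by rewrite -(x0_uniq y y_sol) (x0_uniq x).
Qed.

Lemma domn_resolvent n y : domn n y -> domn n.+1 (Rz y).
Proof.
elim: n y => [|n IHn] y Dy; have [dRy Ry_eq] := resolventP y; split => //.
have -> : A (Rz y) = z0 *: Rz y - y.
  by move: Ry_eq; set x := Rz y => <-; rewrite opprB addrC subrK.
by apply: domnB => //; apply/domnZ/IHn/domnS.
Qed.

Lemma domn_iter_resolvent n i y : domn n y -> domn (n + i) (iter i Rz y).
Proof.
by move=> Dy; elim: i => [|i IHi]; rewrite ?addn0 // addnS; apply: domn_resolvent.
Qed.

Lemma iter_resolvent_horner_op i y : Dinf y ->
  iter i Rz (hop ((z0%:P - 'X) ^+ i) y) = y.
Proof.
move=> Dy; elim: i => [|i IHi]; first by rewrite expr0 horner_op1.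
have Dpy : Dinf (hop ((z0%:P - 'X) ^+ i) y) := D_horner_op DAinf _ Dy.
rewrite iterSr exprS (horner_opM DAinf) // horner_opB horner_opC horner_opX.
by rewrite resolvent_eq //; apply: dom_inf_dom.
Qed.

Lemma horner_op_CsubX_injective : horner_op_injective Dinf A (z0%:P - 'X).
Proof.
move=> x /dom_inf_dom dx; rewrite horner_opB horner_opC horner_opX => x_eq0.
by rewrite -(resolvent_eq dx) x_eq0; have := resolvent_eq dom0; rewrite scaler0 A0 subr0.
Qed.

Lemma horner_op_CsubX_surjective : horner_op_surjective Dinf A (z0%:P - 'X).
Proof.
move=> y /dom_infP Dy; exists (Rz y).
  by apply/dom_infP => n; apply/domnS/domn_resolvent.
by rewrite horner_opB horner_opC horner_opX; case: (resolventP y).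
Qed.

End Resolvent.

Section RationalFunction.
Variables (N : nat) (z : 'I_N -> C) (nu : 'I_N -> nat).
Variables (w : 'I_N -> nat -> C) (w0 mu : C).
Hypothesis z_res : forall j, in_resolvent_set dom A (z j).
Hypothesis mu_neq_w0 : mu != w0.
Local Notation rA := (ratop dom A z nu w w0).

Definition ratden : {poly C} := \prod_(j < N) ((z j)%:P - 'X) ^+ nu j.

Definition ratden_cofactor (j : 'I_N) (i : nat) : {poly C} :=
  ((z j)%:P - 'X) ^+ (nu j - i) * \prod_(k < N | k != j) ((z k)%:P - 'X) ^+ nu k.

Definition ratnum : {poly C} := (w0 - mu) *: ratden +
  \sum_(j < N) \sum_(1 <= i < (nu j).+1) w j i *: ratden_cofactor j i.

Lemma ratden_split j i : (i <= nu j)%N ->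
  ratden = ((z j)%:P - 'X) ^+ i * ratden_cofactor j i.
Proof. by move=> le_i; rewrite /ratden (bigD1 j) //= mulrA -exprD subnKC. Qed.

Lemma ratden_neq0 : ratden != 0.
Proof.
by apply/prodf_neq0 => j _; rewrite expf_neq0 // -opprB oppr_eq0 polyXsubC_eq0.
Qed.

Lemma horner_ratden_neq0 l : (forall j, l != z j) -> ratden.[l] != 0.
Proof.
move=> l_nonpole; rewrite horner_prod; apply/prodf_neq0 => j _.
by rewrite horner_exp !hornerE expf_neq0 // subr_eq0 eq_sym.
Qed.

Lemma horner_ratnum l : (forall j, l != z j) ->
  ratnum.[l] = ratden.[l] * (ratfun z nu w w0 l - mu).
Proof.
move=> l_nonpole.
have inner j : (\sum_(1 <= i < (nu j).+1) w j i *: ratden_cofactor j i).[l]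
    = ratden.[l] * \sum_(1 <= i < (nu j).+1) w j i / (z j - l) ^+ i.
  rewrite horner_sum mulr_sumr; apply: eq_big_nat => i /andP[_ le_i].
  have CsubX_l : ((z j)%:P - 'X).[l] = z j - l by rewrite !hornerE.
  have zBl_exp_neq0 : (z j - l) ^+ i != 0 by rewrite expf_neq0 // subr_eq0 eq_sym.
  rewrite hornerZ (ratden_split le_i) [in RHS]hornerM horner_exp CsubX_l.
  by rewrite mulrAC mulrCA divff ?mulr1.
rewrite /ratnum /ratfun hornerD hornerZ horner_sum (eq_bigr _ (fun j _ => inner j)).
by rewrite -mulr_sumr; ring.
Qed.

Lemma root_ratnum l : (forall j, l != z j) ->
  root ratnum l = (ratfun z nu w w0 l == mu).
Proof.
move=> l_nonpole; rewrite rootE horner_ratnum // mulf_eq0.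
by rewrite (negbTE (horner_ratden_neq0 l_nonpole)) subr_eq0.
Qed.

Lemma ratnum_neq0 : ratnum != 0.
Proof.
have size_cofactor j i : (0 < i <= nu j)%N ->
    (size (ratden_cofactor j i) < size ratden)%N.
  case/andP=> i_gt0 le_i; have := ratden_neq0; rewrite (ratden_split le_i).
  move: (ratden_cofactor j i) => cof.
  rewrite mulf_eq0 negb_or => /andP[CsubX_neq0 cof_neq0].
  rewrite size_mul // -opprB exprNn size_Msign size_exp_XsubC.
  by rewrite addSn /= -[X in (X < _)%N]add0n ltn_add2r.
have w0Bmu_neq0 : w0 - mu != 0 by rewrite subr_eq0 eq_sym.
rewrite /ratnum -size_poly_eq0 size_polyDl size_scale ?size_poly_eq0 ?ratden_neq0 //.
apply: size_sum_lt; first by rewrite size_poly_gt0 ratden_neq0.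
move=> j _; rewrite big_nat_cond; apply: size_sum_lt => [|i /andP[i_range _]].
  by rewrite size_poly_gt0 ratden_neq0.
by rewrite (leq_ltn_trans (size_scale_leq _ _)) ?size_cofactor.
Qed.

Lemma ratden_injective : horner_op_injective Dinf A ratden.
Proof.
apply: (horner_op_injective_prod DAinf) => j _.
exact/(horner_op_injectiveX DAinf)/horner_op_CsubX_injective.
Qed.

Lemma ratden_surjective : horner_op_surjective Dinf A ratden.
Proof.
apply: (horner_op_surjective_prod DAinf) => j _.
exact/(horner_op_surjectiveX DAinf)/horner_op_CsubX_surjective.
Qed.

Lemma ratop_horner_ratden x : Dinf x ->
  rA (hop ratden x) - mu *: hop ratden x = hop ratnum x.
Proof.
move=> Dx; rewrite /ratop /ratnum horner_opD horner_opZ horner_op_sum.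
rewrite addrAC -scalerBl; congr (_ + _); apply: eq_bigr => j _.
rewrite horner_op_sum; apply: eq_big_nat => i /andP[_ le_i].
rewrite horner_opZ (ratden_split le_i) (horner_opM DAinf) //.
by rewrite iter_resolvent_horner_op //; exact: (D_horner_op DAinf _ Dx).
Qed.

Lemma iter_ratop_horner_ratden n x : Dinf x ->
  iter n (fun y => rA y - mu *: y) (hop (ratden ^+ n) x) = hop (ratnum ^+ n) x.
Proof.
elim: n x => [|n IHn] x Dx; first by rewrite !expr0 !horner_op1.
rewrite iterSr exprS (horner_opM DAinf) //=.
rewrite ratop_horner_ratden; last exact: (D_horner_op DAinf _ Dx).
rewrite (horner_op_comm DAinf) // IHn; last exact: (D_horner_op DAinf _ Dx).
by rewrite -(horner_opM DAinf) // -exprSr.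
Qed.

Lemma iter_ratop_eq0 n y : Dinf y ->
  iter n (fun x => rA x - mu *: x) y = 0 <-> hop (ratnum ^+ n) y = 0.
Proof.
move=> Dy; have [x Dx <-] := horner_op_surjectiveX DAinf n ratden_surjective Dy.
rewrite iter_ratop_horner_ratden // (horner_op_comm DAinf) //.
split=> [->|]; first exact: horner_op0r DAinf _.
apply: (horner_op_injectiveX DAinf (n := n) ratden_injective).
exact: (D_horner_op DAinf _ Dx).
Qed.

Lemma domn_ratop_sub k y : domn k y -> domn k.+1 (rA y - w0 *: y).
Proof.
move=> Dy; rewrite /ratop addrAC subrr add0r.
apply: domn_sum => j _; rewrite big_nat_cond.
apply: domn_sum => i /andP[/andP[i_gt0 _] _].
apply/domnZ/(domn_leq _ (domn_iter_resolvent (z_res j) i Dy)).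
by rewrite -addn1 leq_add2l.
Qed.

Lemma domn_ratop_succ k y : domn k y -> domn k.+1 (rA y - mu *: y) -> domn k.+1 y.
Proof.
move=> Dy Dshift_y; have w0Bmu_neq0 : w0 - mu != 0 by rewrite subr_eq0 eq_sym.
have shifts_sub : (rA y - mu *: y) - (rA y - w0 *: y) = (w0 - mu) *: y.
  by rewrite opprB addrCA addrAC subrr add0r scalerBl.
have -> : y = (w0 - mu)^-1 *: ((rA y - mu *: y) - (rA y - w0 *: y)).
  by rewrite shifts_sub scalerA mulVf ?scale1r.
by apply/domnZ/domnB => //; apply: domn_ratop_sub.
Qed.

Lemma gen_eigenspace_ratop_dom_inf u : gen_eigenspace rA mu u -> Dinf u.
Proof.
move=> [n [_ shift_n_u]]; apply/dom_infP => k.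
suff domn_iter j : (j <= n)%N -> domn k (iter j (fun x => rA x - mu *: x) u).
  exact: (domn_iter 0%N).
elim: k j => [//|k IHk] j le_jn.
rewrite -(subKn le_jn); elim: (n - j)%N (leq_subr j n) => [|d IHd] le_dn.
  by rewrite subn0 shift_n_u; apply: domn0.
apply: domn_ratop_succ; first by apply: IHk; rewrite leq_subr.
by move: (IHd (ltnW le_dn)); rewrite -subnSK.
Qed.

Lemma gen_eigenspace_ratop_decomposition u : gen_eigenspace rA mu u ->
  exists (s : seq C) (f : C -> H),
    [/\ uniq s, forall l, l \in s -> ratfun_preimage z nu w w0 mu l,
        forall l, l \in s -> gen_eigenspace_inf dom A l (f l)
      & u = \sum_(l <- s) f l].
Proof.
move=> u_gen; have Du := gen_eigenspace_ratop_dom_inf u_gen.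
have [n [_ /(iter_ratop_eq0 _ Du) ratnum_u]] := u_gen.
have [|s [f [s_uniq s_roots f_gen ->]]] :=
  gen_eigvec_decomposition DAinf (@solve_monicpoly C) _ Du ratnum_u.
  by rewrite expf_neq0 // ratnum_neq0.
pose nonpole l := [forall j, l != z j].
have f_pole l : l \in s -> ~~ nonpole l -> f l = 0.
  move=> ls; rewrite negb_forall => /existsP[j /negPn/eqP l_eq].
  apply: (gen_eigvec_eq0 DAinf _ (f_gen l ls)) => x Dx; rewrite l_eq -opprB horner_opN.
  by move/eqP; rewrite oppr_eq0 => /eqP; apply: horner_op_CsubX_injective.
exists [seq l <- s | nonpole l], f; split.
- exact: filter_uniq.
- move=> l; rewrite mem_filter => /andP[/forallP l_nonpole ls]; split=> //.
  move: (s_roots l ls); rewrite rootE horner_exp expf_eq0 => /andP[_].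
  by rewrite -rootE root_ratnum // => /eqP.
- by move=> l; rewrite mem_filter => /andP[_ /f_gen/gen_eigenspace_infE].
- rewrite big_filter [RHS]big_mkcond; apply: eq_big_seq => l ls.
  by case: ifP => // /negbT/(f_pole l ls).
Qed.

Lemma sum_gen_eigenspace_ratop (s : seq C) (f : C -> H) :
  (forall l, l \in s -> ratfun_preimage z nu w w0 mu l) ->
  (forall l, l \in s -> gen_eigenspace_inf dom A l (f l)) ->
  gen_eigenspace rA mu (\sum_(l <- s) f l).
Proof.
move=> s_pre f_inf.
have f_gen l : l \in s -> gen_eigvec Dinf A l (f l) by move/f_inf/gen_eigenspace_infE.
have Df l : l \in s -> Dinf (f l) by case/f_gen.
have [m f_m] := gen_eigvec_exponent DAinf f_gen.
exists m.+1; split=> //; apply/iter_ratop_eq0.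
  by rewrite big_seq; apply: dom_inf_sum.
rewrite big_seq (horner_op_sumr DAinf) // big1 // => l ls.
apply: (horner_op_dvdp_eq0 DAinf _ (Df l ls) (f_m l ls)).
have [l_nonpole rl_eq] := s_pre l ls.
rewrite (dvdp_trans (dvdp_exp2l _ (leqnSn m))) // dvdp_exp2r //.
by rewrite dvdp_XsubCl root_ratnum // rl_eq.
Qed.

End RationalFunction.
End SmoothVectors.

Theorem lemma2p1 (R : realType) (H : completeNormedModType R[i])
    (ip : H -> H -> R[i]) (dom : set H) (A : H -> H)
    (N : nat) (z : 'I_N -> R[i]) (nu : 'I_N -> nat)
    (w : 'I_N -> nat -> R[i]) (w0 : R[i]) (mu : R[i]) :
  is_inner_product ip ->
  is_closed_operator dom A ->
  injective z ->
  (forall j, (0 < nu j)%N) ->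
  (forall j, in_resolvent_set dom A (z j)) ->
  mu != w0 ->
  is_direct_sum (gen_eigenspace (ratop dom A z nu w w0) mu)
                (gen_eigenspace_inf dom A)
                (ratfun_preimage z nu w w0 mu).
Proof.
move=> _ [dom_subspace A_comb _] _ _ z_res mu_neq_w0; split=> [u|].
  split; first exact: gen_eigenspace_ratop_decomposition.
  by case=> s [f [_ s_pre f_inf ->]]; apply: sum_gen_eigenspace_ratop.
move=> s f s_uniq _ f_inf.
apply: (gen_eigvec_independent (dom_inf_linear_invariant dom_subspace A_comb)) => //.
by move=> l /f_inf/(gen_eigenspace_infE dom_subspace A_comb).
Qed.
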